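(* Let $\alpha>0$ be a constant. If $g(n)\le \alpha n^2$ for all $n$, then $f_4(n)\le \alpha(1+o(1))\frac{n^2}{2}$ as $n\to\infty$.
   Context: $K_n$ is the complete graph and $K_n^{(4)}$ the complete $4$-uniform hypergraph on $n$ vertices. A complete $4$-partite $4$-graph is given by pairwise disjoint nonempty vertex sets $V_1,\dots,V_4$, with edges all $4$-sets meeting each $V_i$ in exactly one vertex; $f_4(n)$ is the minimum number of complete $4$-partite $4$-graphs whose edge sets partition the edge set of $K_n^{(4)}$. A complete bipartite subgraph of a graph $G$ has two disjoint nonempty vertex classes $X,Y$ and edge set all $xy$ with $x\in X,y\in Y$ (all these being edges of $G$). For graphs $G,H$, a block is a set $E(B_1)\times E(B_2)$ where $B_1$ is a complete bipartite subgraph of $G$ and $B_2$ is a complete bipartite subgraph of $H$; $g(G,H)$ is the minimum number of blocks partitioning $E(G)\times E(H)$, and $g(n)=g(K_n,K_n)$. *)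

From mathcomp Require Import all_boot all_order all_algebra.
From mathcomp Require Import reals.
Set Implicit Arguments. Unset Strict Implicit. Unset Printing Implicit Defensive.

Section Partitions.
Variables (U Str : finType) (valid : pred Str) (E : Str -> {set U}) (S : {set U}).

Definition is_partition k (F : {ffun 'I_k -> Str}) : bool :=
  [forall j, valid (F j) && (E (F j) \subset S)] &&
  [forall u in S, #|[set j | u \in E (F j)]| == 1].

Definition has_partition (k : nat) : bool :=
  [exists F : {ffun 'I_k -> Str}, is_partition F].

Lemma has_partition_card (x0 : Str) :
  (forall u, u \in S -> exists x, valid x /\ E x = [set u]) ->
  exists k, has_partition k.
Proof.
move=> Hs; exists #|S|; apply/existsP.
pose F := [ffun j : 'I_#|S| =>
             odflt x0 [pick x | valid x && (E x == [set enum_val j])]].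
have HF j : valid (F j) /\ E (F j) = [set enum_val j].
  rewrite /F ffunE; case: pickP => [x /andP[vx /eqP ->] //|H0].
  have [x [vx ex]] := Hs _ (enum_valP j).
  by move: (H0 x); rewrite vx ex eqxx.
exists F; apply/andP; split.
  apply/forallP => j; have [vj ej] := HF j; rewrite vj ej /=.
  by rewrite sub1set enum_valP.
apply/forall_inP => u uS.
have -> : [set j | u \in E (F j)] = [set enum_rank_in uS u].
  apply/setP => j; rewrite !inE; have [_ ->] := HF j; rewrite inE.
  apply/eqP/eqP => [Hu|->]; first by apply: enum_val_inj; rewrite enum_rankK_in.
  by rewrite enum_rankK_in.
by rewrite cards1.
Qed.

Definition min_partition_size (x0 : Str)
  (H : forall u, u \in S -> exists x, valid x /\ E x = [set u]) : nat :=
  ex_minn (has_partition_card x0 H).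

End Partitions.

Definition K4edges (n : nat) : {set {set 'I_n}} := [set e : {set 'I_n} | #|e| == 4].

Definition complete4partite (n : nat) (V : {ffun 'I_4 -> {set 'I_n}}) : bool :=
  [forall i, V i != set0] &&
  [forall i, forall j, (i != j) ==> [disjoint V i & V j]].

Definition edges4 (n : nat) (V : {ffun 'I_4 -> {set 'I_n}}) : {set {set 'I_n}} :=
  [set e : {set 'I_n} | (#|e| == 4) && [forall i, #|e :&: V i| == 1]].

Lemma f4_single (n : nat) (e : {set 'I_n}) : e \in K4edges n ->
  exists V, complete4partite V /\ edges4 V = [set e].
Proof.
rewrite inE => /eqP he.
have hs : size (enum e) = 4 by rewrite -cardE.
have hu := enum_uniq (pred_of_set e).
have eE : e = [set x in enum e] by apply/setP => x; rewrite inE mem_enum.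
move: hs hu eE; case: (enum e) => [|a [|b [|c [|d [|]]]]] //= _ hu eE.
move: hu; rewrite !inE !negb_or => /and4P[/and3P[ab ac ad] /andP[bc bd] cd _].
exists [ffun i : 'I_4 => [set nth a [:: a; b; c; d] i]]; split.
  apply/andP; split.
    by apply/forallP => i; rewrite ffunE; apply/set0Pn; exists (nth a [:: a; b; c; d] i); rewrite inE.
  apply/forallP => i; apply/forallP => j; apply/implyP => ij.
  rewrite !ffunE disjoints1 inE.
  case: i j ij => [[|[|[|[|i]]]] Hi] [[|[|[|[|j]]]] Hj] //= ij.
  all: try by rewrite ?(eq_sym b) ?(eq_sym c) ?(eq_sym d).
apply/setP => f; rewrite !inE.
have Hall : [forall i, #|f :&: [ffun i : 'I_4 => [set nth a [:: a; b; c; d] i]] i| == 1] =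
            [&& a \in f, b \in f, c \in f & d \in f].
  apply/forallP/and4P => [H|[ha hb hc hd] i].
    have g (i : 'I_4) : nth a [:: a; b; c; d] i \in f.
      move/eqP: (H i); rewrite ffunE.
      case: (boolP (nth a [:: a; b; c; d] i \in f)) => // hn.
      by rewrite disjoint_setI0 ?cards0 // disjoint_sym disjoints1.
    by split; [exact: (g ord0) | exact: (g (@Ordinal 4 1 isT)) | exact: (g (@Ordinal 4 2 isT)) | exact: (g (@Ordinal 4 3 isT))].
  rewrite ffunE setIC (setIidPl _) ?cards1 // sub1set.
  by case: i => [[|[|[|[|i]]]] ?].
rewrite Hall; apply/idP/eqP => [/andP[/eqP hf /and4P[ha hb hc hd]]|->].
  apply/eqP; rewrite eq_sym eqEcard; apply/andP; split.
    by apply/subsetP => x; rewrite eE !inE => /or4P[] /eqP ->.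
  by rewrite hf -he.
by rewrite he eqxx eE !inE !eqxx !orbT.
Qed.

Definition f4 (n : nat) : nat :=
  @min_partition_size _ _ (@complete4partite n) (@edges4 n) (K4edges n)
    [ffun=> set0] (@f4_single n).

Definition Knedges (n : nat) : {set {set 'I_n}} := [set e : {set 'I_n} | #|e| == 2].

(* complete bipartite subgraph of K_n with classes (X, Y): disjoint, nonempty
   (all xy are then automatically edges of K_n) *)
Definition complete_bip (n : nat) (B : {set 'I_n} * {set 'I_n}) : bool :=
  [&& B.1 != set0, B.2 != set0 & [disjoint B.1 & B.2]].

Definition bip_edges (n : nat) (B : {set 'I_n} * {set 'I_n}) : {set {set 'I_n}} :=
  [set [set x; y] | x in B.1, y in B.2].

Definition block_valid (n : nat)
  (b : ({set 'I_n} * {set 'I_n}) * ({set 'I_n} * {set 'I_n})) : bool :=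
  complete_bip b.1 && complete_bip b.2.

Definition block_edges (n : nat)
  (b : ({set 'I_n} * {set 'I_n}) * ({set 'I_n} * {set 'I_n}))
  : {set {set 'I_n} * {set 'I_n}} :=
  setX (bip_edges b.1) (bip_edges b.2).

Definition KnKn (n : nat) : {set {set 'I_n} * {set 'I_n}} :=
  setX (Knedges n) (Knedges n).

Lemma bip_single (n : nat) (e : {set 'I_n}) : e \in Knedges n ->
  exists B, complete_bip B /\ bip_edges B = [set e].
Proof.
rewrite inE => /cards2P[a [b [ab ->]]].
exists ([set a], [set b]); split.
  apply/and3P; split; rewrite /=.
  - by apply/set0Pn; exists a; rewrite inE.
  - by apply/set0Pn; exists b; rewrite inE.
  - by rewrite disjoints1 inE.
apply/setP => f; rewrite inE; apply/imset2P/eqP => [[x y /=]|->].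
  by rewrite !inE => /eqP -> /eqP ->.
by exists a b; rewrite /= ?inE.
Qed.

Lemma block_single (n : nat) (p : {set 'I_n} * {set 'I_n}) : p \in KnKn n ->
  exists b, block_valid b /\ block_edges b = [set p].
Proof.
case: p => e1 e2; rewrite inE => /andP[/= h1 h2].
have [B1 [v1 E1]] := bip_single h1; have [B2 [v2 E2]] := bip_single h2.
exists (B1, B2); split; first by rewrite /block_valid v1 v2.
rewrite /block_edges /= E1 E2; apply/setP => -[x y].
by rewrite in_setX !inE xpair_eqE.
Qed.

Definition g (n : nat) : nat :=
  @min_partition_size _ _ (@block_valid n) (@block_edges n) (KnKn n)
    ((set0, set0), (set0, set0)) (@block_single n).

From mathcomp Require Import all_boot all_order all_algebra.
From mathcomp Require Import reals.
From mathcomp Require Import zify ring lra.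
Import Order.TTheory GRing.Theory Num.Theory.
Set Implicit Arguments. Unset Strict Implicit. Unset Printing Implicit Defensive.

(* Cut the vertices 0 < 1 < ... < n-1 into k consecutive parts of size
   s = n/k + 1 and sort the 4-sets a < b < c < d by the parts of their points.
   Those with a, b in one part and c, d in a later one are covered, for each of
   the C(k,2) pairs of parts, by a copy of an optimal block partition of
   E(K_s) x E(K_s): C(k,2) g(s) <= alpha n^2/2 + O(kn) graphs.  Every other
   4-set is covered by exactly one complete 4-partite graph whose classes follow
   each other in vertex order and are determined by the parts or vertices next to
   the gap between b and c; there are O(kn + ns) = O(kn + n^2/k) of them, which
   is at most eps alpha n^2/2 once k and then n are large. *)

Section MinPartition.

Variables (U Str : finType) (valid : pred Str) (E : Str -> {set U}) (S : {set U}).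
Variables (x0 : Str) (singletons : forall u, u \in S -> exists x, valid x /\ E x = [set u]).

Lemma min_partition_sizeP : has_partition valid E S (min_partition_size x0 singletons).
Proof. by rewrite /min_partition_size; case: ex_minnP. Qed.

Lemma min_partition_size_le (s : seq Str) :
  all valid s -> {in s, forall x, E x \subset S} ->
  (forall u, u \in S -> count (fun x => u \in E x) s = 1) ->
  min_partition_size x0 singletons <= size s.
Proof.
move=> valid_s sub_s count_s; rewrite /min_partition_size; case: ex_minnP => m _; apply.
apply/existsP; exists [ffun j : 'I_(size s) => nth x0 s j]; apply/andP; split.
  apply/forallP => j; rewrite ffunE; have sj := mem_nth x0 (ltn_ord j).
  by rewrite (allP valid_s) ?sub_s.
apply/forall_inP => u uS; apply/eqP; rewrite -(count_s u uS) -[in RHS](mkseq_nth x0 s).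
rewrite /mkseq -val_enum_ord -map_comp count_map cardsE cardE /enum_mem size_filter.
rewrite (@eq_filter _ _ predT) // filter_predT.
by apply: eq_count => j; rewrite /in_mem /= unfold_in ffunE.
Qed.

End MinPartition.

Lemma count_map_enum_pred1 (I : finType) (T : Type) (P : pred I) (F : I -> T)
    (q : pred T) (C : bool) (i0 : I) :
  (forall i, P i -> q (F i) = C && (i == i0)) -> (C -> P i0) ->
  count q [seq F i | i <- enum P] = C.
Proof.
move=> qF P_i0; rewrite count_map (eq_in_count (a2 := fun i => C && (i == i0))); last first.
  by move=> i; rewrite mem_enum => /qF.
case: C P_i0 {qF} => [/(_ isT) P_i0 | _]; last exact: count_pred0.
by rewrite (eq_count (a2 := pred1 i0)) // count_uniq_mem ?enum_uniq // mem_enum [i0 \in P]P_i0.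
Qed.

Lemma eq_set2 (T : finType) (p q x y : T) :
  ([set p; q] == [set x; y]) = (p == x) && (q == y) || (p == y) && (q == x).
Proof.
apply/eqP/idP => [E|/orP[]/andP[/eqP-> /eqP->] //]; last by rewrite setUC.
move/setP: E => E; have := E y; have := E x; have := E q; have := E p.
rewrite !inE !eqxx ?orbT /= => /esym/orP[]/eqP-> /esym/orP[]/eqP->; rewrite ?eqxx ?orbT //=.
all: by rewrite ?andbT !orbb (eq_sym x y) => *.
Qed.

Lemma mem_bip_edges n (B : {set 'I_n} * {set 'I_n}) (p q : 'I_n) :
  ([set p; q] \in bip_edges B) = (p \in B.1) && (q \in B.2) || (p \in B.2) && (q \in B.1).
Proof.
apply/imset2P/idP => [[x y xX yY /eqP]|].
  by rewrite eq_set2 => /orP[]/andP[/eqP-> /eqP->]; rewrite xX yY ?orbT.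
by case/orP=> /andP[pX qY]; [exists p q | exists q p => //; rewrite setUC].
Qed.

Lemma mem_bip_edges_lt n (B : {set 'I_n} * {set 'I_n}) (p q : 'I_n) :
  {in B.1 & B.2, forall x y : 'I_n, x < y} -> p < q ->
  ([set p; q] \in bip_edges B) = (p \in B.1) && (q \in B.2).
Proof.
move=> XY pq; rewrite mem_bip_edges; case: (boolP (_ && _)) => //= _.
by apply/negP => /andP[pY qX]; have := XY q p qX pY; rewrite ltnNge ltnW.
Qed.

Lemma cards4_sorted n (e : {set 'I_n}) : #|e| = 4 ->
  exists a b c d : 'I_n, [/\ a < b, b < c, c < d & e = [set a; b; c; d]].
Proof.
pose t := sort (fun x y : 'I_n => x <= y) (enum e).
have t_sorted : sorted (fun x y : 'I_n => x <= y) t by apply: sort_sorted => x y; apply: leq_total.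
have t_uniq : uniq t by rewrite sort_uniq enum_uniq.
have et : e = [set x in t] by apply/setP => x; rewrite inE mem_sort mem_enum.
rewrite cardE -(size_sort (fun x y : 'I_n => x <= y)) -/t.
move: t_sorted t_uniq et; case: t => [|a [|b [|c [|d [|]]]]] //= /and4P[ab bc cd _].
rewrite !inE -!val_eqE /= => abcd -> _; exists a, b, c, d; split; try lia.
by apply/setP => x; rewrite !inE -!orbA.
Qed.

Lemma card_set4I (T : finType) (a b c d : T) (A : {set T}) : uniq [:: a; b; c; d] ->
  #|[set a; b; c; d] :&: A| = (a \in A) + (b \in A) + (c \in A) + (d \in A).
Proof.
move=> abcd; have -> : [set a; b; c; d] :&: A = [set x in filter (mem A) [:: a; b; c; d]].
  by apply/setP => x; rewrite !inE mem_filter !inE -!orbA andbC.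
by rewrite cardsE (card_uniqP (filter_uniq _ abcd)) size_filter /= addn0 !addnA.
Qed.

Lemma forall_ord4 (p : pred 'I_4) :
  [forall i, p i] = [&& p (@Ordinal 4 0 isT), p (@Ordinal 4 1 isT), p (@Ordinal 4 2 isT)
                      & p (@Ordinal 4 3 isT)].
Proof.
apply/forallP/and4P => [p_all | [p0 p1 p2 p3] [[|[|[|[|i]]]] lti]] //.
all: by rewrite (bool_irrelevance lti isT).
Qed.

(* [xi] encodes "point x lies in class i", for four points a < b < c < d. *)
Lemma split_transversal (a0 a1 a2 a3 b0 b1 b2 b3 c0 c1 c2 c3 d0 d1 d2 d3 : bool) :
  a0 + a1 + a2 + a3 <= 1 -> b0 + b1 + b2 + b3 <= 1 ->
  c0 + c1 + c2 + c3 <= 1 -> d0 + d1 + d2 + d3 <= 1 ->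
  ~~ ((b0 || b1) && (a2 || a3)) -> ~~ ((c0 || c1) && (a2 || a3)) ->
  ~~ ((d0 || d1) && (a2 || a3)) -> ~~ ((c0 || c1) && (b2 || b3)) ->
  ~~ ((d0 || d1) && (b2 || b3)) -> ~~ ((d0 || d1) && (c2 || c3)) ->
  [&& a0 + b0 + c0 + d0 == 1, a1 + b1 + c1 + d1 == 1,
      a2 + b2 + c2 + d2 == 1 & a3 + b3 + c3 + d3 == 1] =
  (a0 && b1 || a1 && b0) && (c2 && d3 || c3 && d2).
Proof.
by case: a0 a1 a2 a3 => [] [] [] [] //; case: b0 b1 b2 b3 => [] [] [] [] //;
  case: c0 c1 c2 c3 => [] [] [] [] //; case: d0 d1 d2 d3 => [] [] [] [].
Qed.

Definition join4 n (L R : {set 'I_n} * {set 'I_n}) : {ffun 'I_4 -> {set 'I_n}} :=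
  [ffun i : 'I_4 => nth set0 [:: L.1; L.2; R.1; R.2] i].

(* The families built below may contain degenerate members with an empty class;
   [covers] disregards them. *)
Definition covers n (e : {set 'I_n}) : pred {ffun 'I_4 -> {set 'I_n}} :=
  fun V => complete4partite V && (e \in edges4 V).

Section Join.

Variables (n : nat) (L R : {set 'I_n} * {set 'I_n}).
Hypotheses (disjL : [disjoint L.1 & L.2]) (disjR : [disjoint R.1 & R.2]).
Hypothesis L_lt_R : {in L.1 :|: L.2 & R.1 :|: R.2, forall x y : 'I_n, x < y}.

Lemma join4_order (x y : 'I_n) : x <= y ->
  ~~ (((y \in L.1) || (y \in L.2)) && ((x \in R.1) || (x \in R.2))).
Proof.
move=> xy; apply/negP => /andP[yL xR].
by have := @L_lt_R y x; rewrite !inE yL xR => /(_ isT isT); rewrite ltnNge xy.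
Qed.

Lemma join4_mem_le1 x : (x \in L.1) + (x \in L.2) + (x \in R.1) + (x \in R.2) <= 1.
Proof.
have dL : ~~ ((x \in L.1) && (x \in L.2)) by apply/negP => /andP[/(disjointFr disjL) ->].
have dR : ~~ ((x \in R.1) && (x \in R.2)) by apply/negP => /andP[/(disjointFr disjR) ->].
move: dL dR (join4_order (leqnn x)).
by case: (x \in L.1) (x \in L.2) (x \in R.1) (x \in R.2) => [] [] [] [].
Qed.

Lemma covers_join4 (a b c d : 'I_n) : a < b -> b < c -> c < d ->
  covers [set a; b; c; d] (join4 L R) =
  ([set a; b] \in bip_edges L) && ([set c; d] \in bip_edges R).
Proof.
move=> ab bc cd; have abcd : uniq [:: a; b; c; d].
  by rewrite /= !inE -!val_eqE /=; lia.
have E4 : ([set a; b; c; d] \in edges4 (join4 L R)) =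
    ([set a; b] \in bip_edges L) && ([set c; d] \in bip_edges R).
  rewrite inE forall_ord4 !ffunE /= !card_set4I //.
  have := card_set4I setT abcd; rewrite setIT !inE => -> /=.
  rewrite !mem_bip_edges.
  by apply: split_transversal; first [exact: join4_mem_le1 | apply: join4_order; lia].
rewrite /covers -E4; apply/andP/idP => [[] //|e_edge]; split=> //.
apply/andP; split.
  move: e_edge; rewrite inE => /andP[_ /forallP e_meets]; apply/forallP => i.
  apply/set0Pn; have /cards1P[x /setP/(_ x)] := e_meets i.
  by rewrite !inE eqxx => /andP[_ xi]; exists x.
apply/forallP => i; apply/forallP => j; apply/implyP => ij.
rewrite -setI_eq0; apply/eqP/setP => x; rewrite !inE !ffunE.
have := join4_mem_le1 x.
by case: i j ij => [[|[|[|[|?]]]] ?] // [[|[|[|[|?]]]] ?] //=;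
  case: (x \in L.1) (x \in L.2) (x \in R.1) (x \in R.2) => [] [] [] [].
Qed.

End Join.

Lemma lt_disjoint n (A B : {set 'I_n}) :
  {in A & B, forall x y : 'I_n, x < y} -> [disjoint A & B].
Proof.
move=> AB; rewrite -setI_eq0; apply/eqP/setP => x; rewrite !inE.
by apply/negP => /andP[xA xB]; have := AB x x xA xB; rewrite ltnn.
Qed.

Lemma covers_join4_lt n (L R : {set 'I_n} * {set 'I_n}) (a b c d : 'I_n) :
  {in L.1 & L.2, forall x y : 'I_n, x < y} -> {in R.1 & R.2, forall x y : 'I_n, x < y} ->
  {in L.1 :|: L.2 & R.1 :|: R.2, forall x y : 'I_n, x < y} ->
  a < b -> b < c -> c < d ->
  covers [set a; b; c; d] (join4 L R) = [&& a \in L.1, b \in L.2, c \in R.1 & d \in R.2].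
Proof.
move=> ltL ltR L_lt_R ab bc cd.
by rewrite covers_join4 ?lt_disjoint // !mem_bip_edges_lt // -!andbA.
Qed.

Lemma card_lt_pairs (m : nat) : 2 * #|[set i : 'I_m * 'I_m | i.1 < i.2]| <= m * m.
Proof.
set A := [set i : 'I_m * 'I_m | i.1 < i.2].
have card_swap : #|swap_pair @: A| = #|A| by apply: card_imset; apply: can_inj swap_pairK.
have disj : [disjoint A & swap_pair @: A].
  rewrite -setI_eq0; apply/eqP/setP => i; rewrite !inE.
  apply/negP => /andP[lt_i /imsetP[[x y]]]; rewrite inE /= => xy iE.
  by move: lt_i; rewrite iE /=; lia.
rewrite mul2n -addnn -{2}card_swap -cardsUI.
move: disj; rewrite -setI_eq0 => /eqP->; rewrite cards0 addn0.
by apply: leq_trans (max_card _) _; rewrite card_prod !card_ord.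
Qed.

Section Construction.

Variables (n k s : nat).
Hypotheses (s_gt0 : 0 < s) (n_le_ks : n <= k * s).

Definition part (x : 'I_n) : nat := x %/ s.
Definition slot (x : 'I_n) : 'I_s := Ordinal (ltn_pmod x s_gt0).

Lemma part_lt (x : 'I_n) : part x < k.
Proof. by rewrite /part ltn_divLR // (leq_trans (ltn_ord x)) // mulnC. Qed.

Lemma part_leq (x y : 'I_n) : x <= y -> part x <= part y.
Proof. exact: leq_div2r. Qed.

Lemma part_ltn (x y : 'I_n) : part x < part y -> x < y.
Proof. by apply: contraTT; rewrite -!leqNgt; apply: part_leq. Qed.

Lemma eq_part_slot (x y : 'I_n) : part x = part y -> slot x = slot y -> x = y.
Proof.
move=> pxy /(congr1 val) /= sxy; apply: val_inj.
by rewrite /= (divn_eq x s) (divn_eq y s) -/(part x) -/(part y) pxy sxy.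
Qed.

Definition lower_parts (β : 'I_k) : {set 'I_n} * {set 'I_n} :=
  ([set x : 'I_n | part x < β], [set x : 'I_n | part x == β]).
Definition upper_parts (γ : 'I_k) : {set 'I_n} * {set 'I_n} :=
  ([set x : 'I_n | part x == γ], [set x : 'I_n | γ < part x]).
Definition lower_vertex (b : 'I_n) : {set 'I_n} * {set 'I_n} :=
  ([set x : 'I_n | (x < b) && (part x == part b)], [set b]).
Definition upper_vertex (c : 'I_n) : {set 'I_n} * {set 'I_n} :=
  ([set c], [set x : 'I_n | (c < x) && (part x == part c)]).
Definition lower_cut (b : 'I_n) : {set 'I_n} * {set 'I_n} := ([set x : 'I_n | x < b], [set b]).
Definition upper_cut (c : 'I_n) : {set 'I_n} * {set 'I_n} := ([set c], [set x : 'I_n | c < x]).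
Definition block_half (β : 'I_k) (B : {set 'I_s} * {set 'I_s}) : {set 'I_n} * {set 'I_n} :=
  ([set x : 'I_n | (part x == β) && (slot x \in B.1)],
   [set x : 'I_n | (part x == β) && (slot x \in B.2)]).

(* A 4-set a < b < c < d with b, c in different parts is covered by exactly one
   member of [family_parts_parts], [family_parts_vertex], [family_vertex_parts]
   or [family_blocks], according to whether a shares the part of b and whether d
   shares the part of c; otherwise it is covered by [family_cuts]. *)
Definition family_parts_parts :=
  [seq join4 (lower_parts i.1) (upper_parts i.2)
  | i <- enum [pred i : 'I_k * 'I_k | i.1 < i.2]].
Definition family_parts_vertex :=
  [seq join4 (lower_parts i.1) (upper_vertex i.2)
  | i <- enum [pred i : 'I_k * 'I_n | i.1 < part i.2]].
Definition family_vertex_parts :=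
  [seq join4 (lower_vertex i.1) (upper_parts i.2)
  | i <- enum [pred i : 'I_n * 'I_k | part i.1 < i.2]].
Definition family_cuts :=
  [seq join4 (lower_cut i.1) (upper_cut i.2)
  | i <- enum [pred i : 'I_n * 'I_n | (i.1 < i.2) && (part i.1 == part i.2)]].

Section Counts.

Variables (a b c d : 'I_n).
Hypotheses (ab : a < b) (bc : b < c) (cd : c < d).

Lemma count_parts_parts :
  count (covers [set a; b; c; d]) family_parts_parts =
  [&& part a < part b, part b < part c & part c < part d].
Proof.
apply: (count_map_enum_pred1 (i0 := (Ordinal (part_lt b), Ordinal (part_lt c))))
  => [[β γ] /= βγ | /and3P[_ ? _] //].
have := part_leq (ltnW ab); have := part_leq (ltnW bc); have := part_leq (ltnW cd).
rewrite covers_join4_lt //= => [|x y|x y|x y]; rewrite !inE.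
  by rewrite xpair_eqE -!val_eqE /=; lia.
all: by move=> *; apply: part_ltn; lia.
Qed.

Lemma count_parts_vertex :
  count (covers [set a; b; c; d]) family_parts_vertex =
  [&& part a < part b, part b < part c & part c == part d].
Proof.
apply: (count_map_enum_pred1 (i0 := (Ordinal (part_lt b), c)))
  => [[β c'] /= βc' | /and3P[_ ? _] //].
have := part_leq (ltnW ab); have := part_leq (ltnW bc); have := part_leq (ltnW cd).
rewrite covers_join4_lt //= => [|x y|x y|x y]; rewrite !inE.
- rewrite xpair_eqE -[β == _]val_eqE /= (eq_sym c').
  by case: (eqVneq c' c) βc' => [->|_] βc'; rewrite ?andbF //=; lia.
- by move=> *; apply: part_ltn; lia.
- by move=> /eqP-> /andP[].
- by move=> xβ /orP[/eqP-> | /andP[_ /eqP py]]; apply: part_ltn; lia.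
Qed.

Lemma count_vertex_parts :
  count (covers [set a; b; c; d]) family_vertex_parts =
  [&& part a == part b, part b < part c & part c < part d].
Proof.
apply: (count_map_enum_pred1 (i0 := (b, Ordinal (part_lt c))))
  => [[b' γ] /= b'γ | /and3P[_ ? _] //].
have := part_leq (ltnW ab); have := part_leq (ltnW bc); have := part_leq (ltnW cd).
rewrite covers_join4_lt //= => [|x y|x y|x y]; rewrite !inE.
- rewrite xpair_eqE -[γ == _]val_eqE /= (eq_sym b').
  by case: (eqVneq b' b) b'γ => [->|_] b'γ; rewrite ?andbF //=; lia.
- by move=> /andP[? _] /eqP->.
- by move=> *; apply: part_ltn; lia.
- by move=> /orP[/andP[_ /eqP px] | /eqP->] yγ; apply: part_ltn; lia.
Qed.

Lemma count_cuts :
  count (covers [set a; b; c; d]) family_cuts = (part b == part c).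
Proof.
apply: (count_map_enum_pred1 (i0 := (b, c))) => [[b' c'] /= /andP[b'c' pb'c'] | pbc].
  rewrite covers_join4_lt //= => [|x y|x y|x y]; rewrite !inE.
  - rewrite xpair_eqE (eq_sym b') (eq_sym c').
    case: (eqVneq b' b) pb'c' => [->|_] pbc'; case: (eqVneq c' c) pbc' => [->|_] pbc;
      by rewrite ?andbF ?ab ?cd ?pbc.
  - by move=> ? /eqP->.
  - by move=> /eqP->.
  - by rewrite -!val_eqE /=; lia.
by rewrite /= bc pbc.
Qed.

End Counts.

Lemma mem_bip_block_half (β : 'I_k) (B : {set 'I_s} * {set 'I_s}) (p q : 'I_n) :
  ([set p; q] \in bip_edges (block_half β B)) =
  [&& part p == β, part q == β & [set slot p; slot q] \in bip_edges B].
Proof.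
by rewrite !mem_bip_edges !inE; case: (part p == β) (part q == β) => [] [] //=; rewrite ?andbF.
Qed.

Lemma block_half_disjoint (β : 'I_k) (B : {set 'I_s} * {set 'I_s}) :
  [disjoint B.1 & B.2] -> [disjoint (block_half β B).1 & (block_half β B).2].
Proof.
move=> dB; rewrite -setI_eq0; apply/eqP/setP => x; rewrite !inE.
by case: (boolP (slot x \in B.1)) => [/(disjointFr dB) -> | _]; rewrite !andbF.
Qed.

Lemma covers_join4_block_half (a b c d : 'I_n) (β γ : 'I_k)
    (B : ({set 'I_s} * {set 'I_s}) * ({set 'I_s} * {set 'I_s})) :
  a < b -> b < c -> c < d -> block_valid B -> β < γ ->
  covers [set a; b; c; d] (join4 (block_half β B.1) (block_half γ B.2)) =
  [&& part a == β, part b == β, part c == γ, part d == γ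
    & ([set slot a; slot b], [set slot c; slot d]) \in block_edges B].
Proof.
move=> ab bc cd /andP[/and3P[_ _ dis1] /and3P[_ _ dis2]] βγ.
rewrite covers_join4 ?block_half_disjoint //.
  rewrite !mem_bip_block_half /block_edges in_setX /=.
  by case: (part a == β) (part b == β) ([set slot a; slot b] \in bip_edges B.1)
    => [] [] [] //=; rewrite ?andbF.
move=> x y; rewrite !inE => /orP[]/andP[/eqP px _] /orP[]/andP[/eqP py _].
all: by apply: part_ltn; lia.
Qed.

Variable blocks : {ffun 'I_(g s) -> ({set 'I_s} * {set 'I_s}) * ({set 'I_s} * {set 'I_s})}.

Definition family_blocks :=
  [seq join4 (block_half i.1.1 (blocks i.2).1) (block_half i.1.2 (blocks i.2).2)
  | i <- enum [pred i : 'I_k * 'I_k * 'I_(g s) | i.1.1 < i.1.2]].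

Definition family :=
  family_parts_parts ++ family_parts_vertex ++ family_vertex_parts ++ family_blocks ++ family_cuts.

Lemma size_family_le : 2 * size family <= k * k * g s + 2 * (k * k + 2 * (k * n) + n * s).
Proof.
have card_prod_le m1 m2 (P : pred ('I_m1 * 'I_m2)) : #|P| <= m1 * m2.
  by apply: leq_trans (max_card _) _; rewrite card_prod !card_ord.
have s_pp : size family_parts_parts <= k * k by rewrite size_map -cardE card_prod_le.
have s_pv : size family_parts_vertex <= k * n by rewrite size_map -cardE card_prod_le.
have s_vp : size family_vertex_parts <= n * k by rewrite size_map -cardE card_prod_le.
have s_blocks : 2 * size family_blocks <= k * k * g s.
  rewrite size_map -cardE.
  have -> : #|[pred i : 'I_k * 'I_k * 'I_(g s) | i.1.1 < i.1.2]| =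
      #|[set i : 'I_k * 'I_k | i.1 < i.2]| * g s.
    rewrite -[X in _ * X]card_ord -cardsT -cardsX.
    by apply: eq_card => -[i j]; rewrite !inE andbT.
  by rewrite mulnA leq_mul2r card_lt_pairs orbT.
have s_cuts : size family_cuts <= n * s.
  rewrite size_map -cardE -[n in n * s]card_ord -[s in _ * s]card_ord -card_prod.
  apply: (@leq_card_in _ _ (fun i : 'I_n * 'I_n => (i.1, slot i.2))) => -[b c] [b' c'].
  rewrite !inE /= => /andP[_ /eqP pbc] /andP[_ /eqP pbc'] [bb' sc].
  by rewrite bb'; congr (_, _); apply: eq_part_slot; [rewrite -pbc -pbc' bb' | apply: val_inj].
rewrite /family !size_cat; lia.
Qed.

Hypothesis blocksP : is_partition (@block_valid s) (@block_edges s) (KnKn s) blocks.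

Lemma count_blocks (a b c d : 'I_n) : a < b -> b < c -> c < d ->
  count (covers [set a; b; c; d]) family_blocks =
  [&& part a == part b, part b < part c & part c == part d].
Proof.
move=> ab bc cd.
set pair := ([set slot a; slot b], [set slot c; slot d]).
have valid_blocks j : block_valid (blocks j) by case/andP: blocksP => /forallP/(_ j)/andP[].
case: (boolP [&& part a == part b, part b < part c & part c == part d]) => [abcd | not_abcd].
  have /and3P[/eqP pab' _ /eqP pcd'] := abcd.
  have sab : slot a != slot b.
    by apply/eqP => /(eq_part_slot pab') abE; move: ab; rewrite abE ltnn.
  have scd : slot c != slot d.
    by apply/eqP => /(eq_part_slot pcd') cdE; move: cd; rewrite cdE ltnn.
  have pair_edge : pair \in KnKn s by rewrite in_setX /Knedges !inE !cards2 sab scd.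
  have /cards1P[j0 j0E] := forall_inP (proj2 (andP blocksP)) pair pair_edge.
  apply: (count_map_enum_pred1 (i0 := (Ordinal (part_lt b), Ordinal (part_lt c), j0)))
    => [[[β γ] j] /= βγ | _] /=; last by move: abcd => /and3P[].
  rewrite covers_join4_block_half //= !xpair_eqE -!val_eqE /=.
  have -> : (pair \in block_edges (blocks j)) = (j == j0) by rewrite -in_set1 -j0E inE.
  rewrite pab' pcd' (eq_sym (β : nat)) (eq_sym (γ : nat)).
  by case: (part b == β) (part d == γ) => [] [].
rewrite count_map; apply/eqP; rewrite -leqn0 leqNgt -has_count.
apply/hasPn => i; rewrite mem_enum => lt_i; rewrite /preim /= covers_join4_block_half //.
apply: contra not_abcd => /and5P[/eqP-> /eqP-> /eqP-> /eqP-> _].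
by rewrite !eqxx andbT; exact: lt_i.
Qed.

Lemma count_covers_family (e : {set 'I_n}) : e \in K4edges n -> count (covers e) family = 1.
Proof.
rewrite inE => /eqP /cards4_sorted [a [b [c [d [ab bc cd ->]]]]].
rewrite !count_cat count_parts_parts // count_parts_vertex // count_vertex_parts //.
rewrite count_blocks // count_cuts //.
have := part_leq (ltnW ab); have := part_leq (ltnW bc); have := part_leq (ltnW cd).
lia.
Qed.

Lemma f4_le_size_family : f4 n <= size family.
Proof.
apply: leq_trans _ (count_size (@complete4partite n) family); rewrite -size_filter.
apply: min_partition_size_le; first exact: filter_all.
  by move=> V _; apply/subsetP => e; rewrite !inE => /andP[].
move=> e e4; rewrite count_filter -[RHS](count_covers_family e4).
by apply: eq_count => V; rewrite /= andbC.
Qed.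

End Construction.

Lemma f4_le_parts (n k : nat) : 0 < k ->
  2 * f4 n <= k * k * g (n %/ k).+1 + 2 * (k * k + 2 * (k * n) + n * (n %/ k).+1).
Proof.
move=> k_gt0; set s := (n %/ k).+1.
have n_le_ks : n <= k * s by rewrite mulnC ltnW // ltn_ceil.
have /existsP[blocks blocksP] : has_partition (@block_valid s) (@block_edges s) (KnKn s) (g s).
  exact: min_partition_sizeP.
apply: leq_trans (size_family_le (ltn0Sn _) n_le_ks blocks); rewrite leq_mul2l.
by rewrite (f4_le_size_family (ltn0Sn _) n_le_ks blocksP).
Qed.

Local Open Scope ring_scope.

Lemma f4_le_real (R : realType) (alpha : R) (n k : nat) : 0 <= alpha ->
  (forall m : nat, (g m)%:R <= alpha * m%:R ^+ 2) -> (0 < k)%N -> (0 < n)%N ->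
  (f4 n)%:R <= alpha / 2 * n%:R ^+ 2 + n%:R ^+ 2 / k%:R
               + (alpha * k%:R + alpha * k%:R ^+ 2 / 2 + k%:R ^+ 2 + 2 * k%:R + 1) * n%:R.
Proof.
move=> alpha_ge0 g_le k_gt0 n_gt0; set s := (n %/ k).+1.
have := f4_le_parts n k_gt0; rewrite -/s -(ler_nat R) !natrD !natrM.
have ks_le : (k * s <= n + k)%N by rewrite mulnS addnC leq_add2r mulnC leq_divM.
move: ks_le (g_le s); rewrite -(ler_nat R) natrD natrM.
set K : R := k%:R; set x : R := n%:R; set S : R := s%:R => ks_le g_s f4_le.
have K_ge1 : 1 <= K by rewrite ler1n.
have x_ge1 : 1 <= x by rewrite ler1n.
have g_bound : K * K * (g s)%:R <= alpha * (x + K) ^+ 2.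
  have : (K * S) ^+ 2 <= (x + K) ^+ 2.
    by rewrite ler_sqr ?nnegrE ?mulr_ge0 ?addr_ge0 ?ler0n.
  have : K * K * (g s)%:R <= K * K * (alpha * S ^+ 2) by rewrite ler_wpM2l ?mulr_ge0 ?ler0n.
  nra.
have xS_bound : x * S <= x ^+ 2 / K + x.
  have -> : x ^+ 2 / K + x = x * ((x + K) / K) by field; rewrite gt_eqF // (lt_le_trans ltr01).
  by rewrite ler_wpM2l ?ler0n // ler_pdivlMr ?(lt_le_trans ltr01) // mulrC.
have : 0 <= alpha * K ^+ 2 * (x - 1) by rewrite !mulr_ge0 ?sqr_ge0 ?subr_ge0.
have : 0 <= K ^+ 2 * (x - 1) by rewrite !mulr_ge0 ?sqr_ge0 ?subr_ge0.
lra.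
Qed.

Lemma absorb_lower_order (R : realFieldType) (alpha eps K C x : R) :
  0 < K -> 0 <= x -> 4 <= alpha * eps * K -> 4 * C <= alpha * eps * x ->
  alpha / 2 * x ^+ 2 + x ^+ 2 / K + C * x <= alpha * (1 + eps) * x ^+ 2 / 2.
Proof.
move=> K_gt0 x_ge0 K_large x_large.
have : x ^+ 2 / K <= alpha * eps * x ^+ 2 / 4.
  by rewrite ler_pdivrMr //; have := ler_wpM2l (sqr_ge0 x) K_large; lra.
have := ler_wpM2l x_ge0 x_large.
lra.
Qed.

Theorem mainTheorem3 (R : realType) (alpha : R) :
  0 < alpha ->
  (forall n : nat, (g n)%:R <= alpha * (n%:R) ^+ 2) ->
  forall eps : R, 0 < eps ->
  exists N : nat, forall n : nat, (N <= n)%N ->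
    (f4 n)%:R <= alpha * (1 + eps) * (n%:R) ^+ 2 / 2.
Proof.
move=> alpha_gt0 g_le eps eps_gt0; have ae_gt0 : 0 < alpha * eps by rewrite mulr_gt0.
pose k := (Num.truncn (4 / (alpha * eps))).+1.
have k_large : 4 <= alpha * eps * k%:R.
  by have := truncnS_gt (4 / (alpha * eps)); rewrite ltr_pdivrMr // mulrC => /ltW.
pose C := alpha * k%:R + alpha * k%:R ^+ 2 / 2 + k%:R ^+ 2 + 2 * k%:R + 1.
exists (Num.truncn (4 * C / (alpha * eps))).+1 => n n_large.
have n_gt0 : (0 < n)%N by apply: leq_trans n_large.
apply: le_trans (f4_le_real (ltW alpha_gt0) g_le (ltn0Sn k.-1) n_gt0) _.
apply: absorb_lower_order; rewrite ?ltr0Sn ?ler0n //.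
have := truncnS_gt (4 * C / (alpha * eps)); rewrite ltr_pdivrMr // => /ltW/le_trans; apply.
by rewrite [_ * (alpha * eps)]mulrC ler_pM2l // ler_nat.
Qed.
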